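(* Let $H$ be any graph obtained from $E_{20}$ by splitting a vertex. Then $H$ contains $K_{3,4}$ or $F_4$ as a minor.
   Context: $E_{20}$ is the graph with vertex set $\{e^0,e^1_1,e^1_2,e^1_3,e^2,e^3_1,e^3_2,e^3_3,e^4\}$ and the 16 edges $e^0e^2$; $e^0e^1_i$ ($i=1,2,3$); $e^1_1e^1_2$, $e^1_2e^1_3$, $e^1_3e^1_1$; and, for $i=1,2,3$, $e^1_ie^3_i$, $e^2e^3_i$, $e^4e^3_i$. $F_4$ is the graph with vertex set $\{f^1,f^2\}\cup\{f^i_j: i\in\{1,2\}, j\in\{1,2,3,4\}\}$ and the 16 edges: for each $i\in\{1,2\}$, $f^if^i_1$, $f^if^i_2$, $f^if^i_4$, $f^i_3f^i_1$, $f^i_3f^i_2$, $f^i_3f^i_4$; and $f^1_jf^2_{5-j}$ for $j=1,2,3,4$. Splitting a vertex $v$ of a graph $H$ means: delete $v$, add two new adjacent vertices $v_1,v_2$, and join each neighbour of $v$ to exactly one of $v_1,v_2$, so that each of $v_1,v_2$ is joined to at least two neighbours of $v$. *)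

(* Finite simple graphs as symmetric irreflexive relations on finTypes. *)
From mathcomp Require Import all_boot.
Set Implicit Arguments. Unset Strict Implicit. Unset Printing Implicit Defensive.

Definition connected_in (T : finType) (G : rel T) (S : {set T}) : Prop :=
  forall x y, x \in S -> y \in S ->
    connect [rel a b | [&& a \in S, b \in S & G a b]] x y.

Definition is_minor (T U : finType) (G : rel T) (H : rel U) : Prop :=
  exists phi : U -> {set T},
    [/\ forall u, phi u != set0,
        forall u, connected_in G (phi u),
        forall u u', u != u' -> [disjoint phi u & phi u'] &
        forall u u', H u u' -> exists x y, [/\ x \in phi u, y \in phi u' & G x y]].

Definition edge_rel (n : nat) (s : seq (nat * nat)) : rel 'I_n :=
  fun x y => ((nat_of_ord x, nat_of_ord y) \in s) || ((nat_of_ord y, nat_of_ord x) \in s).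

(* E_20, labelling: e^0=0, e^1_1=1, e^1_2=2, e^1_3=3, e^2=4,
   e^3_1=5, e^3_2=6, e^3_3=7, e^4=8 *)
Definition E20 : rel 'I_9 := @edge_rel 9
  [:: (0,4); (0,1); (0,2); (0,3); (1,2); (2,3); (3,1);
      (1,5); (2,6); (3,7); (4,5); (4,6); (4,7); (8,5); (8,6); (8,7)].

(* F_4, labelling: f^1=0, f^2=1, f^1_j = 1+j, f^2_j = 5+j (j=1..4) *)
Definition F4 : rel 'I_10 := @edge_rel 10
  [:: (0,2); (0,3); (0,5); (4,2); (4,3); (4,5);
      (1,6); (1,7); (1,9); (8,6); (8,7); (8,9);
      (2,9); (3,8); (4,7); (5,6)].

Definition K34 : rel 'I_7 := fun x y => (x < 3) != (y < 3).

(* Splitting vertex v of G: vertices are those of G other than v, plus two new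
   adjacent vertices (inr false) and (inr true); a neighbour x of v is joined to
   the new vertex (inr (side x)). *)
Definition split_vtx (T : finType) (v : T) : finType := ({x : T | x != v} + bool)%type.

Definition split_rel (T : finType) (G : rel T) (v : T) (side : T -> bool)
  : rel (split_vtx v) :=
  fun a b => match a, b with
  | inl x, inl y => G (val x) (val y)
  | inr b1, inr b2 => b1 != b2
  | inl x, inr c => G (val x) v && (side (val x) == c)
  | inr c, inl x => G (val x) v && (side (val x) == c)
  end.

Definition valid_split (T : finType) (G : rel T) (v : T) (side : T -> bool) : Prop :=
  forall c : bool, 2 <= #|[set x | G x v & side x == c]|.
Arguments split_rel {T} G v side.

(* A valid split of [v] needs at least four neighbours of [v], so [v] is e^0,
   some e^1_i or e^2, and its four neighbours are divided two and two between
   the new vertices: 5 * 6 graphs, as the side function matters only on the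
   neighbourhood of [v].  For each of them an explicit minor model is
   exhibited (a copy of F_4 as a subgraph, or a K_{3,4} model whose three
   large branch sets are edges) and checked by computation on vertex codes. *)

From mathcomp Require Import all_boot.
Set Implicit Arguments. Unset Strict Implicit. Unset Printing Implicit Defensive.

Definition nonempty_path (T : Type) (G : rel T) (s : seq T) : bool :=
  if s is x :: s' then path G x s' else false.

Section PathModels.
Variables (T U : finType) (G : rel T) (H : rel U).
Hypothesis G_sym : symmetric G.

Lemma nonempty_path_connected_in s : nonempty_path G s -> connected_in G [set y in s].
Proof.
case: s => // x s Gxs y z yS zS; set e := [rel a b | _ ].
have e_sym : connect_sym e by apply: sym_connect_sym => a b /=; rewrite G_sym andbCA.
have exs : path e x s.
  apply: (@sub_in_path _ (mem (x :: s)) G) Gxs; last exact/allP.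
  by move=> a b aS bS /= ->; rewrite !inE andbT; apply/andP.
have x_to w : w \in [set y in x :: s] -> connect e x w.
  by rewrite inE; apply: (path_connect exs).
by apply: connect_trans (x_to z zS); rewrite e_sym; apply: x_to.
Qed.

Lemma path_model_minor (phi : U -> seq T) :
    (forall u, nonempty_path G (phi u)) ->
    (forall u u', u != u' -> [disjoint phi u & phi u']) ->
    (forall u u', H u u' -> exists x y, [/\ x \in phi u, y \in phi u' & G x y]) ->
  is_minor G H.
Proof.
move=> paths disj adj; exists (fun u => [set x in phi u]); split=> [u|u|u u' uu'|u u' Huu'].
- by have := paths u; case: (phi u) => // x s _; apply/set0Pn; exists x; rewrite inE mem_head.
- exact: nonempty_path_connected_in.
- by rewrite (eq_disjoint (in_set _)) (eq_disjoint_r (in_set _)) disj.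
- by have [x [y [xu yu' Gxy]]] := adj u u' Huu'; exists x, y; rewrite !inE.
Qed.

End PathModels.

(* Enumerations of finite types and [insub] do not reduce under [vm_compute], so
   certificates are minor models whose branch sets are lists of integer codes. *)
Definition coded_model (P : pred nat) (Gc : rel nat) (n : nat) (Hc : rel nat)
    (L : seq (seq nat)) : bool :=
  let ns := iota 0 n in let branch u := nth [::] L u in
  [&& all (fun u => all P (branch u) && nonempty_path Gc (branch u)) ns,
      all (fun u => all (fun u' => (u == u') || ~~ has (mem (branch u')) (branch u)) ns) ns &
      all (fun u => all (fun u' =>
        ~~ Hc u u' || has (fun a => has (Gc a) (branch u')) (branch u)) ns) ns].

Section CodedModels.
Variables (T : finType) (G : rel T) (dec : nat -> T) (P : pred nat) (Gc : rel nat).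
Hypotheses (G_sym : symmetric G) (dec_inj : {in P &, injective dec})
  (decG : {in P &, forall a b, G (dec a) (dec b) = Gc a b}).

Lemma coded_nonempty_path s : all P s -> nonempty_path Gc s -> nonempty_path G (map dec s).
Proof.
case: s => // a s Ps Gcs; rewrite /= path_map.
by apply: (@sub_in_path _ P Gc) Ps Gcs => b c bP cP; rewrite /= decG.
Qed.

Lemma coded_model_minor n (H : rel 'I_n) (Hc : rel nat) L :
  (forall u u' : 'I_n, H u u' = Hc u u') -> coded_model P Gc n Hc L -> is_minor G H.
Proof.
move=> HE /and3P[/allP paths /allP disj /allP adj].
have ns (u : 'I_n) : nat_of_ord u \in iota 0 n by rewrite mem_iota ltn_ord.
have /all_and2[PL GL] (u : 'I_n) :
    all P (nth [::] L u) /\ nonempty_path Gc (nth [::] L u) by apply/andP/paths.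
apply: (@path_model_minor _ _ _ H G_sym (fun u => map dec (nth [::] L u))) => [u|u u' uu'|u u'].
- exact: coded_nonempty_path (PL u) (GL u).
- have /allP/(_ _ (ns u'))/orP[/eqP/val_inj/eqP|] := disj _ (ns u); first by rewrite (negbTE uu').
  rewrite disjoint_has; apply: contraNN => /hasP[_ /mapP[a au ->] /mapP[b bu' eq_ab]].
  have aP := allP (PL u) a au; have bP := allP (PL u') b bu'.
  by apply/hasP; exists a; rewrite // (dec_inj aP bP eq_ab).
- rewrite HE => Hcu; have /allP/(_ _ (ns u'))/orP[|] := adj _ (ns u); first by rewrite Hcu.
  case/hasP=> a au /hasP[b bu' Gab].
  exists (dec a), (dec b); rewrite !map_f // decG //.
  + exact: allP (PL u) a au.
  + exact: allP (PL u') b bu'.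
Qed.

End CodedModels.

Definition edge_adj (s : seq (nat * nat)) : rel nat :=
  fun a b => ((a, b) \in s) || ((b, a) \in s).

Lemma edge_rel_sym n (s : seq (nat * nat)) : symmetric (@edge_rel n s).
Proof. by move=> x y; rewrite /edge_rel orbC. Qed.

Lemma split_rel_sym (T : finType) (G : rel T) v side :
  symmetric G -> symmetric (split_rel G v side).
Proof. by move=> G_sym [x|c] [y|d] //=; rewrite ?G_sym // eq_sym. Qed.

(* Codes [0 .. n-1] name the old vertices and [n + c] the new vertex [inr c]. *)
Definition split_code_ok (n v a : nat) : bool := (a < n.+2) && (a != v).

Definition split_adj (n : nat) (s : seq (nat * nat)) (v : nat) (sb : seq bool) : rel nat :=
  fun a b => match a < n, b < n with
  | true, true => edge_adj s a b
  | true, false => edge_adj s a v && (nth false sb a == (b == n.+1))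
  | false, true => edge_adj s b v && (nth false sb b == (a == n.+1))
  | false, false => a != b
  end.

Section SplitCodes.
Variables (n : nat) (s : seq (nat * nat)) (v : 'I_n).

Definition split_dec (a : nat) : split_vtx v :=
  if insub a is Some x then (if insub x is Some y then inl y else inr false)
  else inr (n < a).

Variant split_dec_spec : nat -> split_vtx v -> Prop :=
  | SplitOld (x : {x : 'I_n | x != v}) : split_dec_spec (val x) (inl x)
  | SplitNew (c : bool) : split_dec_spec (n + c) (inr c).

Lemma split_decP a : split_code_ok n v a -> split_dec_spec a (split_dec a).
Proof.
case/andP=> a_lt a_v; rewrite /split_dec; case: (ltnP a n) => [an | na].
  have xv : Ordinal an != v by [].
  by rewrite insubT insubT; apply: (SplitOld (exist _ (Ordinal an) xv)).
rewrite insubF; last by rewrite ltnNge na.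
have [-> | ->] : a = n + false \/ a = n + true.
  move: a_lt; rewrite ltnS leq_eqVlt => /orP[/eqP-> | a_le]; first by right; rewrite addn1.
  by left; apply/eqP; rewrite addn0 eqn_leq -ltnS a_le.
- by rewrite [X in _ < X]addn0 ltnn; apply: (SplitNew false).
- by rewrite [X in _ < X]addn1 ltnSn; apply: (SplitNew true).
Qed.

Lemma split_dec_inj : {in split_code_ok n v &, injective split_dec}.
Proof. by move=> a b /split_decP[x|c] /split_decP[y|d] // [->]. Qed.

Lemma split_new_lt (c : bool) : (n + c < n) = false.
Proof. by rewrite ltnNge leq_addr. Qed.

Lemma split_new_eq (c : bool) : (n + c == n.+1) = c.
Proof. by case: c; rewrite ?addn1 ?addn0 ?eqxx // eqn_leq ltnn andbF. Qed.

Variables (side : 'I_n -> bool) (sb : seq bool).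
Hypothesis sideE : forall x : 'I_n, side x = nth false sb x.

Lemma split_adjE : {in split_code_ok n v &, forall a b,
  split_rel (@edge_rel n s) v side (split_dec a) (split_dec b) = split_adj n s v sb a b}.
Proof.
move=> a b /split_decP[x|c] /split_decP[y|d];
  rewrite /split_adj ?ltn_ord ?split_new_lt ?split_new_eq ?eqn_add2l //=.
- by rewrite sideE.
- by rewrite sideE.
- by case: c d => [] [].
Qed.

End SplitCodes.

Lemma card_ord_count n (P : pred nat) : #|[set x : 'I_n | P x]| = count P (iota 0 n).
Proof. by rewrite cardsE cardE size_filter -enumT -val_enum_ord count_map. Qed.

Definition split_pattern n (s : seq (nat * nat)) (v : nat) (sb : seq bool) : seq bool :=
  [seq nth false sb i | i <- iota 0 n & edge_adj s i v].

Definition valid_split_code n (s : seq (nat * nat)) (v : nat) (sb : seq bool) : bool :=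
  all (fun c => 2 <= count (fun i => edge_adj s i v && (nth false sb i == c)) (iota 0 n))
      [:: false; true].

Lemma valid_split_codeP n s (v : 'I_n) (side : 'I_n -> bool) sb :
    (forall x, side x = nth false sb x) ->
  valid_split (@edge_rel n s) v side -> valid_split_code n s v sb.
Proof.
move=> sideE valid; apply/allP=> c _; rewrite -card_ord_count.
by have := valid c; congr (_ <= _); apply: eq_card => x; rewrite !inE sideE.
Qed.

Fixpoint bool_seqs n : seq (seq bool) :=
  if n is n'.+1 then [seq b :: s | b <- [:: false; true], s <- bool_seqs n'] else [:: [::]].

Lemma mem_bool_seqs n (s : seq bool) : size s = n -> s \in bool_seqs n.
Proof.
elim: n s => [|n IHn] [|b s] // [size_s].
by apply: (@allpairs_f _ _ _ (fun b s => b :: s)); [case: b | apply: IHn].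
Qed.

(* [E20] and [F4] are convertible to [edge_rel] of these lists. *)
Definition E20_edges : seq (nat * nat) :=
  [:: (0,4); (0,1); (0,2); (0,3); (1,2); (2,3); (3,1);
      (1,5); (2,6); (3,7); (4,5); (4,6); (4,7); (8,5); (8,6); (8,7)].

Definition F4_edges : seq (nat * nat) :=
  [:: (0,2); (0,3); (0,5); (4,2); (4,3); (4,5);
      (1,6); (1,7); (1,9); (8,6); (8,7); (8,9);
      (2,9); (3,8); (4,7); (5,6)].

Definition K34_adj : rel nat := fun a b => (a < 3) != (b < 3).

Inductive split_model := K34_model of seq (seq nat) | F4_model of seq (seq nat) | no_model.

(* Indexed by the split vertex and by the sides of its neighbours in
   increasing order; vertex codes as for [split_code_ok 9 v]. *)
Definition E20_model (v : nat) (pattern : seq bool) : split_model :=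
  match v, pattern with
  | 0, [:: false; false; true; true] =>
      F4_model [:: [:: 8]; [:: 9]; [:: 5]; [:: 7]; [:: 4]; [:: 6]; [:: 2]; [:: 10]; [:: 3]; [:: 1]]
  | 0, [:: false; true; false; true] =>
      F4_model [:: [:: 8]; [:: 9]; [:: 5]; [:: 6]; [:: 4]; [:: 7]; [:: 3]; [:: 10]; [:: 2]; [:: 1]]
  | 0, [:: false; true; true; false] =>
      F4_model [:: [:: 8]; [:: 10]; [:: 6]; [:: 5]; [:: 4]; [:: 7]; [:: 3]; [:: 9]; [:: 1]; [:: 2]]
  | 0, [:: true; false; false; true] =>
      F4_model [:: [:: 8]; [:: 9]; [:: 6]; [:: 5]; [:: 4]; [:: 7]; [:: 3]; [:: 10]; [:: 1]; [:: 2]]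
  | 0, [:: true; false; true; false] =>
      F4_model [:: [:: 8]; [:: 10]; [:: 5]; [:: 6]; [:: 4]; [:: 7]; [:: 3]; [:: 9]; [:: 2]; [:: 1]]
  | 0, [:: true; true; false; false] =>
      F4_model [:: [:: 8]; [:: 10]; [:: 5]; [:: 7]; [:: 4]; [:: 6]; [:: 2]; [:: 9]; [:: 3]; [:: 1]]
  | 1, [:: false; false; true; true] =>
      F4_model [:: [:: 8]; [:: 9]; [:: 5]; [:: 7]; [:: 4]; [:: 6]; [:: 2]; [:: 0]; [:: 3]; [:: 10]]
  | 1, [:: false; true; false; true] =>
      F4_model [:: [:: 8]; [:: 9]; [:: 5]; [:: 6]; [:: 4]; [:: 7]; [:: 3]; [:: 0]; [:: 2]; [:: 10]]
  | 1, [:: false; true; true; false] =>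
      K34_model [:: [:: 2; 6]; [:: 3; 7]; [:: 5; 9]; [:: 0]; [:: 4]; [:: 8]; [:: 10]]
  | 1, [:: true; false; false; true] =>
      K34_model [:: [:: 2; 6]; [:: 3; 7]; [:: 5; 10]; [:: 0]; [:: 4]; [:: 8]; [:: 9]]
  | 1, [:: true; false; true; false] =>
      F4_model [:: [:: 8]; [:: 10]; [:: 5]; [:: 6]; [:: 4]; [:: 7]; [:: 3]; [:: 0]; [:: 2]; [:: 9]]
  | 1, [:: true; true; false; false] =>
      F4_model [:: [:: 8]; [:: 10]; [:: 5]; [:: 7]; [:: 4]; [:: 6]; [:: 2]; [:: 0]; [:: 3]; [:: 9]]
  | 2, [:: false; false; true; true] =>
      F4_model [:: [:: 8]; [:: 9]; [:: 5]; [:: 7]; [:: 4]; [:: 6]; [:: 10]; [:: 0]; [:: 3]; [:: 1]]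
  | 2, [:: false; true; false; true] =>
      F4_model [:: [:: 8]; [:: 9]; [:: 6]; [:: 5]; [:: 4]; [:: 7]; [:: 3]; [:: 0]; [:: 1]; [:: 10]]
  | 2, [:: false; true; true; false] =>
      K34_model [:: [:: 1; 5]; [:: 3; 7]; [:: 6; 9]; [:: 0]; [:: 4]; [:: 8]; [:: 10]]
  | 2, [:: true; false; false; true] =>
      K34_model [:: [:: 1; 5]; [:: 3; 7]; [:: 6; 10]; [:: 0]; [:: 4]; [:: 8]; [:: 9]]
  | 2, [:: true; false; true; false] =>
      F4_model [:: [:: 8]; [:: 10]; [:: 6]; [:: 5]; [:: 4]; [:: 7]; [:: 3]; [:: 0]; [:: 1]; [:: 9]]
  | 2, [:: true; true; false; false] =>
      F4_model [:: [:: 8]; [:: 10]; [:: 5]; [:: 7]; [:: 4]; [:: 6]; [:: 9]; [:: 0]; [:: 3]; [:: 1]]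
  | 3, [:: false; false; true; true] =>
      F4_model [:: [:: 8]; [:: 9]; [:: 5]; [:: 6]; [:: 4]; [:: 7]; [:: 10]; [:: 0]; [:: 2]; [:: 1]]
  | 3, [:: false; true; false; true] =>
      F4_model [:: [:: 8]; [:: 9]; [:: 6]; [:: 5]; [:: 4]; [:: 7]; [:: 10]; [:: 0]; [:: 1]; [:: 2]]
  | 3, [:: false; true; true; false] =>
      K34_model [:: [:: 1; 5]; [:: 2; 6]; [:: 7; 9]; [:: 0]; [:: 4]; [:: 8]; [:: 10]]
  | 3, [:: true; false; false; true] =>
      K34_model [:: [:: 1; 5]; [:: 2; 6]; [:: 7; 10]; [:: 0]; [:: 4]; [:: 8]; [:: 9]]
  | 3, [:: true; false; true; false] =>
      F4_model [:: [:: 8]; [:: 10]; [:: 6]; [:: 5]; [:: 4]; [:: 7]; [:: 9]; [:: 0]; [:: 1]; [:: 2]]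
  | 3, [:: true; true; false; false] =>
      F4_model [:: [:: 8]; [:: 10]; [:: 5]; [:: 6]; [:: 4]; [:: 7]; [:: 9]; [:: 0]; [:: 2]; [:: 1]]
  | 4, [:: false; false; true; true] =>
      K34_model [:: [:: 2; 6]; [:: 3; 7]; [:: 5; 9]; [:: 0]; [:: 1]; [:: 8]; [:: 10]]
  | 4, [:: false; true; false; true] =>
      K34_model [:: [:: 1; 5]; [:: 3; 7]; [:: 6; 9]; [:: 0]; [:: 2]; [:: 8]; [:: 10]]
  | 4, [:: false; true; true; false] =>
      K34_model [:: [:: 1; 5]; [:: 2; 6]; [:: 7; 9]; [:: 0]; [:: 3]; [:: 8]; [:: 10]]
  | 4, [:: true; false; false; true] =>
      K34_model [:: [:: 1; 5]; [:: 2; 6]; [:: 7; 10]; [:: 0]; [:: 3]; [:: 8]; [:: 9]]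
  | 4, [:: true; false; true; false] =>
      K34_model [:: [:: 1; 5]; [:: 3; 7]; [:: 6; 10]; [:: 0]; [:: 2]; [:: 8]; [:: 9]]
  | 4, [:: true; true; false; false] =>
      K34_model [:: [:: 2; 6]; [:: 3; 7]; [:: 5; 10]; [:: 0]; [:: 1]; [:: 8]; [:: 9]]
  | _, _ => no_model
  end.

Definition E20_split_certified (v : nat) (sb : seq bool) : bool :=
  let ok := split_code_ok 9 v in let G := split_adj 9 E20_edges v sb in
  match E20_model v (split_pattern 9 E20_edges v sb) with
  | K34_model L => coded_model ok G 7 K34_adj L
  | F4_model L => coded_model ok G 10 (edge_adj F4_edges) L
  | no_model => false
  end.

Lemma E20_splits_certified :
  all (fun v => all (fun sb => valid_split_code 9 E20_edges v sb ==> E20_split_certified v sb)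
                    (bool_seqs 9))
      (iota 0 9).
Proof. by vm_compute. Qed.

Lemma E20_split_certified_minor (v : 'I_9) (side : 'I_9 -> bool) sb :
    (forall x, side x = nth false sb x) -> E20_split_certified v sb ->
  is_minor (split_rel E20 v side) K34 \/ is_minor (split_rel E20 v side) F4.
Proof.
move=> sideE; have G_sym := split_rel_sym (v := v) side (@edge_rel_sym 9 E20_edges).
have coded := coded_model_minor G_sym (@split_dec_inj 9 v) (split_adjE E20_edges sideE).
rewrite /E20_split_certified; case: E20_model => // L ok.
- by left; apply: coded ok.
- by right; apply: coded ok.
Qed.

Theorem lemma4p2 (v : 'I_9) (side : 'I_9 -> bool) :
  valid_split E20 v side ->
  is_minor (split_rel E20 v side) K34 \/ is_minor (split_rel E20 v side) F4.
Proof.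
move=> valid; pose sb := mkseq (fun i => side (inord i)) 9.
have sideE (x : 'I_9) : side x = nth false sb x by rewrite nth_mkseq // inord_val.
apply: (E20_split_certified_minor sideE).
have v_iota : nat_of_ord v \in iota 0 9 by rewrite mem_iota ltn_ord.
have sb_seqs : sb \in bool_seqs 9 by apply: mem_bool_seqs; rewrite size_mkseq.
have /allP/(_ sb sb_seqs)/implyP := allP E20_splits_certified v v_iota.
by apply; apply: valid_split_codeP sideE valid.
Qed.
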